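(* Let $P$ be a poset and $v$ an assignment of variables to elements of $P$. Then for all $n\in\omega$ and $1\leq k,r,s<\omega$: $P,v\models\phi_{krsn}(x_1,\ldots,x_k,y)$ if and only if $\exists$ has an $n$-strategy for the $(\alpha,\beta)$-game with starting position $(\{v(x_1),\ldots,v(x_k)\},\{v(y)\})$ for all $2\leq\alpha\leq r+1$ and $2\leq\beta\leq s+1$.
   Context: Work in the first-order signature with one binary relation $\leq$; write $\vec{x}_k=(x_1,\ldots,x_k)$. For $1\leq k<\omega$: $J_k(\vec{x}_k,y)$ is a formula holding under $v$ iff $v(y)$ is the join of $\{v(x_1),\ldots,v(x_k)\}$, and $M_k(\vec{x}_k,y)$ iff $v(y)$ is their meet; $C_k(\vec{x}_k,y)=\bigvee_{i=1}^k(y=x_i)$ and $D_k=\neg C_k$; $C_{km}(\vec{x}_k,\vec{y}_m)$ holds iff $\{v(y_1),\ldots,v(y_m)\}\subseteq\{v(x_1),\ldots,v(x_k)\}$. Define $\sigma_k(\vec{x}_k,c)=\exists z(C_k(\vec{x}_k,z)\wedge z\leq c)$, $\tau_{kr}(\vec{x}_k,\vec{a}_r,c)=C_{kr}(\vec{x}_k,\vec{a}_r)\wedge M_r(\vec{a}_r,c)$, $\rho_{ks}(\vec{x}_k,\vec{b}_s)=\exists z(C_k(\vec{x}_k,z)\wedge J_s(\vec{b}_s,z))$. Define recursively $\phi_{krs0}(\vec{x}_k,y)=D_k(\vec{x}_k,y)$ and $\phi_{krs(n+1)}(\vec{x}_k,y)=\forall\vec{a}_r\forall\vec{b}_s\forall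 c\Big(\big(\sigma_k(\vec{x}_k,c)\to\phi_{(k+1)rsn}(\vec{x}_k,c,y)\big)\wedge\big(\tau_{kr}(\vec{x}_k,\vec{a}_r,c)\to\phi_{(k+1)rsn}(\vec{x}_k,c,y)\big)\wedge\big(\rho_{ks}(\vec{x}_k,\vec{b}_s)\to\bigvee_{i=1}^s\phi_{(k+1)rsn}(\vec{x}_k,b_i,y)\big)\Big)$. The $(\alpha,\beta)$-game on $P$ with starting position $(U_0,V)$ is played between $\forall$ and $\exists$ in rounds $0,1,2,\ldots$; a set $U$ is maintained, initially $U_0$, with $V$ fixed. Each round $\forall$ moves and $\exists$ responds: (1) if $b\geq a$ for some $a\in U$, $\forall$ may play $(b)$ and $\exists$ must add $b$ to $U$; (2) if $A\subseteq U$ with $|A|<\alpha$ and $\bigwedge A$ exists in $P$, $\forall$ may play $A$ and $\exists$ must add $\bigwedge A$ to $U$; (3) if $B\subseteq P$ with $|B|<\beta$ and $\bigvee B$ exists and lies in $U$, $\forall$ may play $B$ and $\exists$ must choose some $b\in B$ and add it to $U$. $\forall$ wins in round $n$ if $U\cap V\neq\emptyset$ at the beginning of round $n$. $\exists$ has an $n$-strategy if she can guarantee that $\forall$ does not win until at least round $n+1$. *)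

(* A poset is a type P with a relation le (partial order axioms
   are hypotheses of the theorem). *)
From Stdlib Require Import List Arith.
Import ListNotations.
Set Implicit Arguments.

Section Defs.
Variable P : Type.
Variable le : P -> P -> Prop.

Definition is_meet (A : list P) (m : P) : Prop :=
  (forall a, In a A -> le m a) /\ (forall z, (forall a, In a A -> le z a) -> le z m).

Definition is_join (B : list P) (j : P) : Prop :=
  (forall b, In b B -> le b j) /\ (forall z, (forall b, In b B -> le b z) -> le j z).

(* Semantics of the formulas, with the values v(x_1),...,v(x_k) given as the
   list xs (so k = length xs) and v(y) given as y. *)
Definition D_sem (xs : list P) (y : P) : Prop := ~ In y xs.
Definition sigma_sem (xs : list P) (c : P) : Prop := exists z, In z xs /\ le z c.
Definition tau_sem (xs a : list P) (c : P) : Prop :=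
  (forall ai, In ai a -> In ai xs) /\ is_meet a c.
Definition rho_sem (xs b : list P) : Prop := exists z, In z xs /\ is_join b z.

Fixpoint phi (r s n : nat) (xs : list P) (y : P) : Prop :=
  match n with
  | 0 => D_sem xs y
  | S n' =>
      forall (a : list P), length a = r ->
      forall (b : list P), length b = s ->
      forall c : P,
        (sigma_sem xs c -> phi r s n' (xs ++ [c]) y) /\
        (tau_sem xs a c -> phi r s n' (xs ++ [c]) y) /\
        (rho_sem xs b -> exists bi, In bi b /\ phi r s n' (xs ++ [bi]) y)
  end.

(* The (alpha,beta)-game with current set U and fixed V = {y}.
   estrat alpha beta n U y : Exists can guarantee that Forall does not win
   before round n+1 (i.e. U meets V at the beginning of none of the rounds 0..n).
   A set A with |A| < alpha is represented by a list of length < alpha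
   enumerating it.  If Exists cannot respond to a legal move she loses. *)
Definition add (U : P -> Prop) (b : P) : P -> Prop := fun p => U p \/ p = b.

Fixpoint estrat (alpha beta n : nat) (U : P -> Prop) (y : P) : Prop :=
  ~ U y /\
  match n with
  | 0 => True
  | S n' =>
      (* move (1) *)
      (forall a b, U a -> le a b -> estrat alpha beta n' (add U b) y) /\
      (* move (2) *)
      (forall (A : list P) m, length A < alpha -> (forall x, In x A -> U x) ->
         is_meet A m -> estrat alpha beta n' (add U m) y) /\
      (* move (3) *)
      (forall (B : list P) j, length B < beta -> is_join B j -> U j ->
         exists b, In b B /\ estrat alpha beta n' (add U b) y)
  end.
End Defs.

(* By induction on n, phi_{krs(n+1)} says exactly that every first-round move
   of the (r+1, s+1)-game leads to a position from which phi_{(k+1)rsn} holds: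
   sigma is move (1), tau is move (2) and rho is move (3). A list of length r
   (resp. s) describes any nonempty set with at most r (resp. s) elements, by
   repeating an entry. The empty sets are the only mismatch: a meet of the
   empty set is a top element and is already reachable by move (1), while a
   join of the empty set is a bottom element, from which move (1) reaches y.
   Finally, an n-strategy for the (r+1, s+1)-game is one for every smaller
   (alpha, beta)-game, which only restricts the moves of the first player. *)
From Stdlib Require Import List Lia.
Import ListNotations.
Set Implicit Arguments.
Unset Strict Implicit.

Lemma pad_to_length (T : Type) (L : list T) m :
  L <> [] -> length L <= m ->
  exists L', length L' = m /\ forall x, In x L' <-> In x L.
Proof.
  intros HL Hm. destruct L as [|h t]; [congruence|].
  exists ((h :: t) ++ repeat h (m - length (h :: t))). split.
  - rewrite length_app, repeat_length. lia.
  - intro x. rewrite in_app_iff. split; [|tauto].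
    intros [H|H]; [exact H|]. apply repeat_spec in H. subst. now left.
Qed.

Section Game.
Variable P : Type.
Variable le : P -> P -> Prop.

Lemma is_meet_equiv A A' m :
  (forall x, In x A' <-> In x A) -> is_meet le A m -> is_meet le A' m.
Proof.
  intros E [Hlow Hgreatest]. split.
  - intros a Ha. apply Hlow, E, Ha.
  - intros z Hz. apply Hgreatest. intros a Ha. apply Hz, E, Ha.
Qed.

Lemma is_join_equiv B B' j :
  (forall x, In x B' <-> In x B) -> is_join le B j -> is_join le B' j.
Proof.
  intros E [Hup Hleast]. split.
  - intros b Hb. apply Hup, E, Hb.
  - intros z Hz. apply Hleast. intros b Hb. apply Hz, E, Hb.
Qed.

Lemma is_meet_nil_top m : is_meet le [] m -> forall z, le z m.
Proof. intros [_ Hgreatest] z. apply Hgreatest. intros a []. Qed.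

Lemma is_join_nil_bot j : is_join le [] j -> forall z, le j z.
Proof. intros [_ Hleast] z. apply Hleast. intros b []. Qed.

Variable y : P.

Lemma estrat_notin alpha beta n U : estrat le alpha beta n U y -> ~ U y.
Proof. destruct n; exact (@proj1 _ _). Qed.

Lemma estrat_ext alpha beta n : forall U V : P -> Prop,
  (forall p, U p <-> V p) ->
  estrat le alpha beta n U y -> estrat le alpha beta n V y.
Proof.
  induction n as [|n IH]; intros U V E [HUy H]; (split; [intro HVy; apply HUy, E, HVy|]).
  - exact I.
  - assert (EA : forall b p, add U b p <-> add V b p).
    { intros b p. unfold add. specialize (E p). tauto. }
    destruct H as [H1 [H2 H3]]. split; [|split].
    + intros a b Va Hab. apply (IH (add U b)); [apply EA|].
      apply (H1 a); [apply E|]; assumption.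
    + intros A m HA HAV Hm. apply (IH (add U m)); [apply EA|].
      apply (H2 A); [exact HA| |exact Hm]. intros x Hx. apply E, HAV, Hx.
    + intros B j HB Hj Vj. destruct (H3 B j HB Hj (proj2 (E j) Vj)) as [b [Hb Hs]].
      exists b. split; [exact Hb|]. apply (IH (add U b)); [apply EA|exact Hs].
Qed.

Lemma estrat_add_In alpha beta n xs c :
  estrat le alpha beta n (add (fun p => In p xs) c) y <->
  estrat le alpha beta n (fun p => In p (xs ++ [c])) y.
Proof.
  assert (E : forall p, add (fun p => In p xs) c p <-> In p (xs ++ [c])).
  { intro p. unfold add. rewrite in_app_iff. simpl. intuition. }
  split; apply estrat_ext; firstorder.
Qed.

Lemma estrat_mono_bounds alpha beta alpha' beta' n :
  alpha' <= alpha -> beta' <= beta -> forall U,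
  estrat le alpha beta n U y -> estrat le alpha' beta' n U y.
Proof.
  intros Halpha Hbeta. induction n as [|n IH]; intros U [HUy H]; split; try assumption.
  destruct H as [H1 [H2 H3]]. split; [|split].
  - intros a b Ua Hab. apply IH, (H1 a); assumption.
  - intros A m HA HAU Hm. apply IH, (H2 A); [lia|assumption|assumption].
  - intros B j HB Hj Uj. destruct (H3 B j) as [b [HbB Hs]]; [lia|assumption|assumption|].
    exists b. split; [exact HbB|]. apply IH, Hs.
Qed.

Hypothesis le_refl : forall x, le x x.
Variables r s : nat.

Lemma phi_S n xs : phi le r s (S n) xs y <->
  (forall c, sigma_sem le xs c -> phi le r s n (xs ++ [c]) y) /\
  (forall a c, length a = r -> tau_sem le xs a c -> phi le r s n (xs ++ [c]) y) /\
  (forall b, length b = s -> rho_sem le xs b ->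
     exists bi, In bi b /\ phi le r s n (xs ++ [bi]) y).
Proof.
  split.
  - intro H. split; [|split].
    + intros c. apply (H (repeat y r) (repeat_length _ _) (repeat y s) (repeat_length _ _)).
    + intros a c Ha. apply (H a Ha (repeat y s) (repeat_length _ _)).
    + intros b Hb. apply (H (repeat y r) (repeat_length _ _) b Hb y).
  - intros [Hsigma [Htau Hrho]] a Ha b Hb c. split; [|split]; intro Hc.
    + exact (Hsigma c Hc).
    + exact (Htau a c Ha Hc).
    + exact (Hrho b Hb Hc).
Qed.

Lemma estrat_S_of_phi_S n xs :
  xs <> [] ->
  (forall c, phi le r s n (xs ++ [c]) y <->
             estrat le (r + 1) (s + 1) n (fun p => In p (xs ++ [c])) y) ->
  phi le r s (S n) xs y -> estrat le (r + 1) (s + 1) (S n) (fun p => In p xs) y.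
Proof.
  intros Hne IH H. apply phi_S in H as [Hsigma [Htau Hrho]].
  assert (Hx0 : exists x0, In x0 xs) by (destruct xs as [|x0]; [congruence|now exists x0; left]).
  destruct Hx0 as [x0 Hx0].
  assert (Hmove1 : forall c, sigma_sem le xs c ->
            estrat le (r + 1) (s + 1) n (add (fun p => In p xs) c) y).
  { intros c Hc. apply estrat_add_In, IH, Hsigma, Hc. }
  split; [|split; [|split]].
  - intro Hy. apply (estrat_notin (Hmove1 x0 (ex_intro _ x0 (conj Hx0 (le_refl x0))))).
    now left.
  - intros a b Ha Hab. apply Hmove1. now exists a.
  - intros A m HA HAxs Hm. destruct A as [|a0 A0].
    + apply Hmove1. exists x0. split; [exact Hx0|exact (is_meet_nil_top Hm x0)].
    + destruct (@pad_to_length _ (a0 :: A0) r) as [L [HL EL]]; [discriminate|simpl in *; lia|].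
      apply estrat_add_In, IH, (Htau L m HL). split.
      * intros x Hx. apply HAxs, EL, Hx.
      * exact (is_meet_equiv EL Hm).
  - intros B j HB Hj Hjxs. destruct B as [|b0 B0].
    + exfalso. apply (estrat_notin (Hmove1 y (ex_intro _ j (conj Hjxs (is_join_nil_bot Hj y))))).
      now right.
    + destruct (@pad_to_length _ (b0 :: B0) s) as [L [HL EL]]; [discriminate|simpl in *; lia|].
      destruct (Hrho L HL) as [bi [Hbi Hphi]].
      * exists j. split; [exact Hjxs|exact (is_join_equiv EL Hj)].
      * exists bi. split; [apply EL, Hbi|apply estrat_add_In, IH, Hphi].
Qed.

Lemma phi_S_of_estrat_S n xs :
  (forall c, phi le r s n (xs ++ [c]) y <->
             estrat le (r + 1) (s + 1) n (fun p => In p (xs ++ [c])) y) ->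
  estrat le (r + 1) (s + 1) (S n) (fun p => In p xs) y -> phi le r s (S n) xs y.
Proof.
  intros IH [_ [H1 [H2 H3]]]. apply phi_S. split; [|split].
  - intros c [z [Hz Hzc]]. apply IH, estrat_add_In, (H1 z c Hz Hzc).
  - intros a c Ha [Hsub Hm]. apply IH, estrat_add_In, (H2 a c); [lia|exact Hsub|exact Hm].
  - intros b Hb [z [Hz Hj]]. destruct (H3 b z) as [bi [Hbi Hs]]; [lia|exact Hj|exact Hz|].
    exists bi. split; [exact Hbi|apply IH, estrat_add_In, Hs].
Qed.

Lemma phi_iff_estrat n : forall xs, xs <> [] ->
  phi le r s n xs y <-> estrat le (r + 1) (s + 1) n (fun p => In p xs) y.
Proof.
  induction n as [|n IH]; intros xs Hne.
  - simpl. unfold D_sem. tauto.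
  - assert (IH' : forall c, phi le r s n (xs ++ [c]) y <->
                    estrat le (r + 1) (s + 1) n (fun p => In p (xs ++ [c])) y).
    { intro c. apply IH. intro E. apply app_eq_nil in E as [_ E]. discriminate. }
    split; [apply estrat_S_of_phi_S|apply phi_S_of_estrat_S]; assumption.
Qed.

End Game.

Theorem lemma5p3 (P : Type) (le : P -> P -> Prop)
  (le_refl : forall x, le x x)
  (le_antisym : forall x y, le x y -> le y x -> x = y)
  (le_trans : forall x y z, le x y -> le y z -> le x z)
  (n k r s : nat) (xs : list P) (y : P) :
  length xs = k -> 1 <= k -> 1 <= r -> 1 <= s ->
  (phi le r s n xs y <->
   forall alpha beta : nat, 2 <= alpha <= r + 1 -> 2 <= beta <= s + 1 ->
     estrat le alpha beta n (fun p => In p xs) y).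
Proof.
  intros Hk Hk1 Hr Hs.
  assert (Hne : xs <> []) by (intros ->; simpl in Hk; lia).
  rewrite (phi_iff_estrat y le_refl r s n Hne).
  split.
  - intros H alpha beta [_ Ha] [_ Hb]. exact (estrat_mono_bounds Ha Hb H).
  - intros H. apply H; lia.
Qed.
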